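(* Let $\mathcal{A}\in\mathbb{C}^{I_{1\ldots N}\times I_{1\ldots N}}$ and let $\mathcal{N}\in\mathbb{C}^{I_{1\ldots N}\times I_{1\ldots N}}$ be a Hermitian positive definite tensor. Put $\tilde{\mathcal{A}}=\mathcal{N}^{1/2}*_N\mathcal{A}*_N\mathcal{N}^{-1/2}$. Then: (i) $\lambda\in\sigma(\mathcal{A})$ if and only if $\lambda\in\sigma(\tilde{\mathcal{A}})$; (ii) $\lambda\in\sigma(\mathcal{A}^{\dagger}_{\mathcal{N},\mathcal{N}})$ if and only if $\lambda\in\sigma(\tilde{\mathcal{A}}^{\dagger})$; (iii) if $\mathcal{A}$ is weighted normal (i.e. $\mathcal{A}^{\#}_{\mathcal{N}\mathcal{N}}*_N\mathcal{A}=\mathcal{A}*_N\mathcal{A}^{\#}_{\mathcal{N}\mathcal{N}}$) and $\lambda\neq0$, then $\lambda\in\sigma(\mathcal{A})$ if and only if $1/\lambda\in\sigma(\mathcal{A}^{\dagger}_{\mathcal{N},\mathcal{N}})$.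
   Context: Write $I_{1\ldots N}$ for $I_1\times\cdots\times I_N$. Einstein product: $(\mathcal{A}*_N\mathcal{B})_{i_1\ldots i_Mj_1\ldots j_L}=\sum_{k_1,\ldots,k_N}a_{i_1\ldots i_Mk_1\ldots k_N}b_{k_1\ldots k_Nj_1\ldots j_L}$ (also when $\mathcal{B}\in\mathbb{C}^{K_{1\ldots N}}$). $\mathcal{A}^H$ is the conjugate transpose. Identity tensor: entry 1 where the two index blocks coincide, 0 otherwise; inverses are with respect to $*_N$. $\mathcal{N}$ is Hermitian positive definite if $\mathcal{N}^H=\mathcal{N}$ and $\mathcal{X}^H*_N\mathcal{N}*_N\mathcal{X}>0$ for all nonzero $\mathcal{X}$; $\mathcal{N}^{1/2}$ is its unique Hermitian positive definite square root and $\mathcal{N}^{-1/2}=(\mathcal{N}^{1/2})^{-1}$. $\sigma(\mathcal{A})$ is the set of $\lambda\in\mathbb{C}$ such that $\mathcal{A}*_N\mathcal{X}=\lambda\mathcal{X}$ for some nonzero $\mathcal{X}\in\mathbb{C}^{I_{1\ldots N}}$. Weighted conjugate transpose: $\mathcal{A}^{\#}_{\mathcal{N}\mathcal{N}}=\mathcal{N}^{-1}*_N\mathcal{A}^H*_N\mathcal{N}$. Weighted Moore-Penrose inverse $\mathcal{A}^{\dagger}_{\mathcal{M},\mathcal{N}}$: the unique $\mathcal{X}$ with $\mathcal{A}*_N\mathcal{X}*_N\mathcal{A}=\mathcal{A}$, $\mathcal{X}*_N\mathcal{A}*_N\mathcal{X}=\mathcal{X}$, $(\mathcal{M}*_N\mathcal{A}*_N\mathcal{X})^H=\mathcal{M}*_N\mathcal{A}*_N\mathcal{X}$,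 $(\mathcal{N}*_N\mathcal{X}*_N\mathcal{A})^H=\mathcal{N}*_N\mathcal{X}*_N\mathcal{A}$; $\mathcal{A}^{\dagger}$ is the case of identity weights. *)

From HB Require Import structures.
From mathcomp Require Import all_boot all_order all_algebra.
From mathcomp Require Import complex.
From Stdlib Require Import ClassicalEpsilon.
Set Implicit Arguments. Unset Strict Implicit. Unset Printing Implicit Defensive.
Import Order.TTheory GRing.Theory Num.Theory.
Local Open Scope ring_scope.

Section Tensors.
Variable R : rcfType.
Local Notation C := R[i].
Variables (N : nat) (I : 'I_N -> nat).

Definition midx := {dffun forall k : 'I_N, 'I_(I k)}.

Definition tensor := midx -> midx -> C.
Definition tvec := midx -> C.

Definition tmul (A B : tensor) : tensor :=
  fun i j => \sum_(k : midx) A i k * B k j.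
Definition tmulv (A : tensor) (X : tvec) : tvec :=
  fun i => \sum_(k : midx) A i k * X k.

Definition tid : tensor := fun i j => if i == j then 1 else 0.

Definition tH (A : tensor) : tensor := fun i j => (A j i)^*.

(* inverse w.r.t. *_N (unique when it exists) *)
Definition tinv (A : tensor) : tensor :=
  epsilon (inhabits A) (fun X => tmul A X = tid /\ tmul X A = tid).

Definition tquad (M : tensor) (X : tvec) : C :=
  \sum_(i : midx) \sum_(j : midx) (X i)^* * M i j * X j.

Definition herm_pd (M : tensor) : Prop :=
  tH M = M /\ forall X : tvec, X <> (fun _ => 0) -> 0 < tquad M X.

(* the unique Hermitian positive definite square root *)
Definition tsqrt (M : tensor) : tensor :=
  epsilon (inhabits M) (fun S => herm_pd S /\ tmul S S = M).
Definition tisqrt (M : tensor) : tensor := tinv (tsqrt M).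

Definition tspec (A : tensor) (l : C) : Prop :=
  exists X : tvec, X <> (fun _ => 0) /\ tmulv A X = (fun i => l * X i).

Definition wct (M A : tensor) : tensor := tmul (tinv M) (tmul (tH A) M).

(* weighted Moore-Penrose inverse A^dagger_{M,N} (unique) *)
Definition is_wmp (M Nw A X : tensor) : Prop :=
  [/\ tmul A (tmul X A) = A, tmul X (tmul A X) = X,
      tH (tmul M (tmul A X)) = tmul M (tmul A X)
    & tH (tmul Nw (tmul X A)) = tmul Nw (tmul X A)].
Definition wmp (M Nw A : tensor) : tensor :=
  epsilon (inhabits A) (is_wmp M Nw A).
Definition mp (A : tensor) : tensor := wmp tid tid A.

End Tensors.

(* Enumerating the multi-indices identifies tensors with square complex matrices: the
   Einstein product becomes the matrix product and the spectrum becomes the set of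
   eigenvalues.  Let S be the positive definite square root of N, obtained from the
   spectral theorem.  Then Ã = S A S^-1 is similar to A, which gives (i), and X |-> S X S^-1
   sends N-weighted Moore-Penrose inverses of A to Moore-Penrose inverses of Ã, so by
   uniqueness A^†_{N,N} is similar to Ã^†, which gives (ii).  Weighted normality of A is
   normality of Ã.  A normal matrix B commutes with B^† because B and B^H have the same
   kernel, so B v = l v with l <> 0 iff B^† v = l^-1 v; transporting back gives (iii). *)

From HB Require Import structures.
From mathcomp Require Import all_boot all_order all_algebra.
From mathcomp Require Import complex spectral sesquilinear.
From Stdlib Require Import ClassicalEpsilon FunctionalExtensionality.
Set Implicit Arguments. Unset Strict Implicit. Unset Printing Implicit Defensive.
Import Order.TTheory GRing.Theory Num.Theory.
Local Open Scope ring_scope.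
Local Open Scope sesquilinear_scope.

Lemma eigenvalue_trmx (F : fieldType) n (A : 'M[F]_n) a :
  eigenvalue A^T a = eigenvalue A a.
Proof.
rewrite !eigenvalue_root_char /char_poly -(det_tr (char_poly_mx A)).
by rewrite /char_poly_mx raddfB /= tr_scalar_mx map_trmx.
Qed.

(* [eigenvalue] is defined through row vectors, [tspec] through column vectors. *)
Lemma eigenvalue_colP (F : fieldType) n (A : 'M[F]_n) a :
  reflect (exists2 v : 'cV_n, A *m v = a *: v & v != 0) (eigenvalue A a).
Proof.
rewrite -eigenvalue_trmx.
apply: (iffP eigenvalueP) => -[v Av v0]; exists v^T; rewrite ?trmx_eq0 //.
- by rewrite -[A]trmxK -trmx_mul Av linearZ.
- by rewrite -trmx_mul Av linearZ.
Qed.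

Lemma eigenvalue_conj (F : fieldType) n (S A : 'M[F]_n) a : S \in unitmx ->
  eigenvalue (S *m A *m invmx S) a = eigenvalue A a.
Proof.
move=> uS; rewrite -conjumx //; apply/idP/idP.
  by apply: eigenvalue_conjmx; rewrite ?stablemx_unit ?row_free_unit.
rewrite -{1}(conjmxK A uS); apply: eigenvalue_conjmx.
  by rewrite stablemx_unit ?unitmx_inv.
by rewrite row_free_unit unitmx_inv.
Qed.

Lemma invmxM (R : comUnitRingType) n (A B : 'M[R]_n) :
  A \in unitmx -> B \in unitmx -> invmx (A *m B) = invmx B *m invmx A.
Proof.
move=> A_unit B_unit; have AB_unit : A *m B \in unitmx by rewrite unitmx_mul A_unit.
apply: (can_inj (mulKmx AB_unit)); rewrite mulmxV // -mulmxA (mulmxA B).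
by rewrite mulmxV // mul1mx mulmxV.
Qed.

Section ConjTranspose.
Variable C : numClosedFieldType.

Lemma trmxC_mul m n p (A : 'M[C]_(m, n)) (B : 'M_(n, p)) :
  (A *m B)^t* = B^t* *m A^t*.
Proof. by rewrite trmx_mul map_mxM. Qed.

Lemma trmxC0 m n : (0 : 'M[C]_(m, n))^t* = 0.
Proof. by rewrite trmx0 map_mx0. Qed.

Lemma trmxC1 n : (1%:M : 'M[C]_n)^t* = 1%:M.
Proof. by rewrite trmx1 map_mx1. Qed.

Lemma trmxCB m n (A B : 'M[C]_(m, n)) : (A - B)^t* = A^t* - B^t*.
Proof. by rewrite raddfB /= map_mxB. Qed.

Lemma trmxC_inv n (A : 'M[C]_n) : (invmx A)^t* = invmx (A^t*).
Proof. by rewrite trmx_inv map_invmx. Qed.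

Lemma trmxC_mul_self_eq0 m n (Z : 'M[C]_(m, n)) : (Z^t* *m Z == 0) = (Z == 0).
Proof.
apply/eqP/eqP => [/matrixP ZZ0|->]; last by rewrite mulmx0.
apply/matrixP => i j; rewrite mxE.
have /psumr_eq0P Zj0 : \sum_k (Z^t*) j k * Z k j = 0 by have := ZZ0 j j; rewrite !mxE.
have /eqP : (Z^t*) j i * Z i j = 0.
  by apply: Zj0 => // k _; rewrite !mxE mulrC mul_conjC_ge0.
by rewrite !mxE mulrC mul_conjC_eq0 => /eqP.
Qed.

Lemma row_free_mul_trmxC_unit m n (K : 'M[C]_(m, n)) :
  row_free K -> K *m K^t* \in unitmx.
Proof.
move=> fK; rewrite -row_free_unit; apply: inj_row_free => v vKK0.
have : (v *m K)^t*^t* *m (v *m K)^t* == 0.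
  by rewrite trmxCK trmxC_mul mulmxA -(mulmxA v) vKK0 mul0mx.
rewrite trmxC_mul_self_eq0 => /eqP /(congr1 (fun Z => Z^t*)) /eqP.
by rewrite trmxCK trmxC0 mulmx_free_eq0 // => /eqP.
Qed.

End ConjTranspose.

Section PositiveDefinite.
Variable C : numClosedFieldType.

Definition posdefmx n (M : 'M[C]_n) : Prop :=
  M^t* = M /\ forall v : 'cV_n, v != 0 -> 0 < (v^t* *m M *m v) 0 0.

Lemma posdefmx_unit n (M : 'M[C]_n) : posdefmx M -> M \in unitmx.
Proof.
move=> [_ M_pos]; rewrite -row_free_unit; apply: inj_row_free => v vM0.
apply/eqP; apply: contraT => v0.
have vt0 : v^t* != 0 by apply: contraNneq v0 => vt0; rewrite -[v]trmxCK vt0 trmxC0.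
by have := M_pos _ vt0; rewrite trmxCK vM0 mul0mx mxE ltxx.
Qed.

Lemma posdefmx_congr n (P D : 'M[C]_n) :
  P \in unitmx -> posdefmx D -> posdefmx (P^t* *m D *m P).
Proof.
move=> uP [D_herm D_pos]; split; first by rewrite !trmxC_mul trmxCK D_herm mulmxA.
move=> v v0; have Pv0 : P *m v != 0.
  by apply: contraNneq v0 => Pv0; rewrite -(mulKmx uP v) Pv0 mulmx0.
by have := D_pos _ Pv0; rewrite trmxC_mul !mulmxA.
Qed.

Lemma posdefmx_diag n (e : 'rV[C]_n) : (forall j, 0 < e 0 j) -> posdefmx (diag_mx e).
Proof.
move=> e_gt0; split.
  apply/matrixP => i j; rewrite !mxE eq_sym; have [->|_] := eqVneq i j.
    by rewrite !mulr1n geC0_conj // ltW.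
  by rewrite !mulr0n rmorph0.
move=> v /cV0Pn [j vj0]; rewrite mul_mx_diag mxE (bigD1 j) //=.
apply: ltr_wpDr.
  apply: sumr_ge0 => k _.
  by rewrite !mxE mulrAC mulrC [_^* * _]mulrC mulr_ge0 ?mul_conjC_ge0 ?ltW.
by rewrite !mxE mulrAC mulrC [_^* * _]mulrC pmulr_rgt0 // lt_def mul_conjC_ge0 mul_conjC_eq0 vj0.
Qed.

Lemma posdefmx_diag_gt0 n (e : 'rV[C]_n) j : posdefmx (diag_mx e) -> 0 < e 0 j.
Proof.
have ej_t : (delta_mx j 0 : 'cV[C]_n)^t* = delta_mx 0 j.
  by apply/matrixP => a b; rewrite !mxE rmorph_nat andbC.
move=> [_ /(_ (delta_mx j 0))]; rewrite ej_t -rowE row_diag_mx -scalemxAl mul_delta_mx.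
rewrite !mxE !eqxx mulr1; apply; apply/cV0Pn; exists j.
by rewrite mxE !eqxx oner_neq0.
Qed.

Lemma posdefmx_sqrt n (M : 'M[C]_n) :
  posdefmx M -> exists2 S, posdefmx S & S *m S = M.
Proof.
move=> M_pd; have M_normal : M \is normalmx by apply/normalmxP; rewrite M_pd.1.
set P := spectralmx M; set d := spectral_diag M.
have P_unitary : P \is unitarymx := spectral_unitarymx M.
have PPt : P *m P^t* = 1%:M by apply/unitarymxP.
have M_diag : M = P^t* *m diag_mx d *m P.
  by rewrite -invmx_unitary //; apply/orthomx_spectralP.
have d_gt0 j : 0 < d 0 j.
  apply: posdefmx_diag_gt0; have -> : diag_mx d = P^t*^t* *m M *m P^t*.
    by rewrite trmxCK M_diag !mulmxA PPt mul1mx -mulmxA PPt mulmx1.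
  by apply: posdefmx_congr => //; rewrite unitarymx_unit ?trmxC_unitary.
pose e := \row_j sqrtC (d 0 j).
exists (P^t* *m diag_mx e *m P).
  apply: posdefmx_congr; first exact: unitarymx_unit.
  by apply: posdefmx_diag => j; rewrite mxE sqrtC_gt0.
rewrite [RHS]M_diag -!mulmxA (mulmxA P) PPt mul1mx (mulmxA (diag_mx e)) mulmx_diag.
by congr (_ *m (diag_mx _ *m _)); apply/rowP => j; rewrite !mxE -expr2 sqrtCK.
Qed.

End PositiveDefinite.

Definition is_wmpmx (C : numClosedFieldType) n (M W A X : 'M[C]_n) : Prop :=
  [/\ A *m X *m A = A, X *m A *m X = X,
      (M *m (A *m X))^t* = M *m (A *m X) & (W *m (X *m A))^t* = W *m (X *m A)].

Notation is_mpmx := (is_wmpmx 1%:M 1%:M).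

Section MoorePenrose.
Variable C : numClosedFieldType.

Lemma is_mpmxP n (A X : 'M[C]_n) :
  is_mpmx A X <->
  [/\ A *m X *m A = A, X *m A *m X = X, (A *m X)^t* = A *m X & (X *m A)^t* = X *m A].
Proof. by rewrite /is_wmpmx !mul1mx. Qed.

(* For a full-rank factorisation, X = G^H (G G^H)^-1 (F^H F)^-1 F^H. *)
Lemma mpmx_mul_exists n r (F : 'M[C]_(n, r)) (G : 'M_(r, n)) :
  row_free G -> row_free (F^t*) -> exists X, is_mpmx (F *m G) X.
Proof.
move=> G_free Ft_free.
have GG_unit := row_free_mul_trmxC_unit G_free.
have FF_unit := row_free_mul_trmxC_unit Ft_free; rewrite trmxCK in FF_unit.
pose X := G^t* *m invmx (G *m G^t*) *m invmx (F^t* *m F) *m F^t*.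
have AX : F *m G *m X = F *m invmx (F^t* *m F) *m F^t*.
  by rewrite /X !mulmxA -[F *m G *m G^t*]mulmxA mulmxK.
have XA : X *m (F *m G) = G^t* *m invmx (G *m G^t*) *m G.
  by rewrite /X !mulmxA -[_ *m F^t* *m F]mulmxA mulmxKV.
exists X; apply/is_mpmxP; split.
- by rewrite AX !mulmxA -[_ *m F^t* *m F]mulmxA mulmxKV.
- by rewrite XA /X !mulmxA -[_ *m G *m G^t*]mulmxA mulmxK.
- by rewrite AX !trmxC_mul trmxCK trmxC_inv trmxC_mul trmxCK mulmxA.
- by rewrite XA !trmxC_mul trmxCK trmxC_inv trmxC_mul trmxCK mulmxA.
Qed.

Lemma mpmx_exists n (A : 'M[C]_n) : exists X, is_mpmx A X.
Proof.
have Ft_free : row_free ((col_base A)^t*).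
  by rewrite /row_free mxrank_map mxrank_tr; exact: col_base_full.
by have := mpmx_mul_exists (row_base_free A) Ft_free; rewrite mulmx_base.
Qed.

Lemma mpmx_unique n (A X Y : 'M[C]_n) : is_mpmx A X -> is_mpmx A Y -> X = Y.
Proof.
move=> /is_mpmxP[AXA XAX AX_herm XA_herm] /is_mpmxP[AYA YAY AY_herm YA_herm].
have AXY : A *m X = A *m Y.
  rewrite -[in LHS]AYA -mulmxA -AY_herm -AX_herm -trmxC_mul.
  by rewrite mulmxA AXA.
have XYA : X *m A = Y *m A.
  rewrite -[in LHS]AYA !mulmxA -mulmxA -XA_herm -YA_herm -trmxC_mul.
  by rewrite -!mulmxA (mulmxA A) AXA.
by rewrite -XAX XYA -mulmxA AXY mulmxA YAY.
Qed.

Lemma hermitian_sqr_mul_conj n (S Y : 'M[C]_n) : S \in unitmx -> S^t* = S ->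
  (S *m S *m Y)^t* = S *m S *m Y <-> (S *m Y *m invmx S)^t* = S *m Y *m invmx S.
Proof.
move=> S_unit S_herm; have Si_herm : (invmx S)^t* = invmx S by rewrite trmxC_inv S_herm.
rewrite !trmxC_mul S_herm Si_herm; split => [YSS|SYS].
- by rewrite -[Y^t* *m S](mulmxK S_unit) -(mulmxA _ S S) YSS !mulmxA mulVmx // mul1mx.
- by rewrite mulmxA -[Y^t* *m S](mulKVmx S_unit) SYS !mulmxA mulmxKV.
Qed.

Lemma wmpmx_conj n (S A X : 'M[C]_n) : S \in unitmx -> S^t* = S ->
  is_wmpmx (S *m S) (S *m S) A X <-> is_mpmx (S *m A *m invmx S) (S *m X *m invmx S).
Proof.
move=> S_unit S_herm; pose c Y := S *m Y *m invmx S.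
have cM Y Z : c Y *m c Z = c (Y *m Z) by rewrite /c !mulmxA mulmxKV.
have c_inj : injective c.
  move=> Y Z /(congr1 (fun T => invmx S *m T *m S)).
  by rewrite /c !mulmxA mulVmx // !mul1mx !mulmxKV.
have c_herm Y : (S *m S *m Y)^t* = S *m S *m Y <-> (c Y)^t* = c Y.
  exact: hermitian_sqr_mul_conj.
rewrite -/(c A) -/(c X) /is_wmpmx !mul1mx !cM.
split=> -[AXA XAX AX_herm XA_herm]; split; try exact/c_herm; try exact: c_inj.
- by rewrite AXA.
- by rewrite XAX.
Qed.

Lemma wmpmx_exists n (S A : 'M[C]_n) : S \in unitmx -> S^t* = S ->
  exists X, is_wmpmx (S *m S) (S *m S) A X.
Proof.
move=> S_unit S_herm; have [Y A_mp] := mpmx_exists (S *m A *m invmx S).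
exists (invmx S *m Y *m S); apply/wmpmx_conj => //.
by rewrite !mulmxA mulmxV // mul1mx mulmxK.
Qed.

End MoorePenrose.

Section NormalMoorePenrose.
Variable C : numClosedFieldType.

Lemma normalmx_mul_eq0 n p (B : 'M[C]_n) (Y : 'M_(n, p)) :
  B \is normalmx -> (B *m Y == 0) = (B^t* *m Y == 0).
Proof.
move=> /normalmxP BBt; rewrite -trmxC_mul_self_eq0 -[RHS]trmxC_mul_self_eq0.
by rewrite !trmxC_mul trmxCK -!mulmxA (mulmxA (B^t*)) (mulmxA B) BBt.
Qed.

Lemma normal_mpmx_comm n (B X : 'M[C]_n) :
  B \is normalmx -> is_mpmx B X -> B *m X = X *m B.
Proof.
move=> B_normal /is_mpmxP[BXB XBX BX_herm XB_herm].
have XBB : X *m B *m B = B.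
  have : B *m (1%:M - X *m B) == 0 by rewrite mulmxBr mulmx1 mulmxA BXB subrr.
  rewrite normalmx_mul_eq0 // => /eqP /(congr1 (fun T => T^t*)).
  rewrite trmxC_mul trmxCK trmxCB trmxC1 XB_herm trmxC0 mulmxBl mul1mx => /eqP.
  by rewrite subr_eq0 eq_sym => /eqP.
have BBX : B *m (B *m X) = B.
  have : (1%:M - B *m X) *m B == 0 by rewrite mulmxBl mul1mx BXB subrr.
  move=> /eqP /(congr1 (fun T => T^t*)).
  rewrite trmxC_mul trmxCB trmxC1 BX_herm trmxC0 => /eqP.
  by rewrite -normalmx_mul_eq0 // mulmxBr mulmx1 subr_eq0 eq_sym => /eqP.
by rewrite -[B in LHS]XBB -[B in RHS]BBX !mulmxA.
Qed.

Lemma normal_mpmx_eigenvalue n (B X : 'M[C]_n) a :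
  B \is normalmx -> is_mpmx B X -> a != 0 -> eigenvalue X a^-1 = eigenvalue B a.
Proof.
move=> B_normal B_mp a0; have BX_comm := normal_mpmx_comm B_normal B_mp.
move/is_mpmxP: B_mp => [BXB XBX _ _].
apply/eigenvalueP/eigenvalueP => -[v v_eig v0]; exists v => //.
- have v_eq : v = a *: (v *m X) by rewrite v_eig scalerA mulfV // scale1r.
  have vBX : v *m B *m X = v.
    by rewrite {1}v_eq -!scalemxAl -!mulmxA (mulmxA X) XBX -v_eq.
  by rewrite {1}v_eq -scalemxAl -mulmxA -BX_comm mulmxA vBX.
- have v_eq : v = a^-1 *: (v *m B) by rewrite v_eig scalerA mulVf // scale1r.
  have vXB : v *m (X *m B) = v.
    by rewrite {1}v_eq -scalemxAl -mulmxA (mulmxA B) BXB -v_eq.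
  by rewrite -[in RHS]vXB -BX_comm mulmxA v_eig -scalemxAl scalerK.
Qed.

Lemma weighted_normal_conj n (S A : 'M[C]_n) : S \in unitmx -> S^t* = S ->
  let Aw := invmx (S *m S) *m (A^t* *m (S *m S)) in
  Aw *m A = A *m Aw -> S *m A *m invmx S \is normalmx.
Proof.
move=> S_unit S_herm /=; rewrite invmxM // => /(congr1 (fun T => S *m T *m invmx S)).
rewrite /= !mulmxA mulmxV // mul1mx mulmxK // => Aw_comm.
apply/normalmxP; rewrite !trmxC_mul trmxC_inv S_herm !mulmxA.
by rewrite Aw_comm.
Qed.

End NormalMoorePenrose.

Section TensorMatrix.
Variable R : rcfType.
Local Notation C := R[i].
Variables (N : nat) (I : 'I_N -> nat).
Local Notation n := #|midx I|.
Implicit Types (A M W X : tensor R I) (x : tvec R I).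

Definition tensor_mx A : 'M[C]_n := \matrix_(a, b) A (enum_val a) (enum_val b).
Definition mx_tensor (B : 'M[C]_n) : tensor R I :=
  fun i j => B (enum_rank i) (enum_rank j).
Definition tvec_col x : 'cV[C]_n := \col_a x (enum_val a).
Definition col_tvec (v : 'cV[C]_n) : tvec R I := fun i => v (enum_rank i) 0.

Lemma tensor_mxK : cancel tensor_mx mx_tensor.
Proof.
move=> A; apply: functional_extensionality => i; apply: functional_extensionality => j.
by rewrite /mx_tensor mxE !enum_rankK.
Qed.

Lemma mx_tensorK : cancel mx_tensor tensor_mx.
Proof. by move=> B; apply/matrixP => a b; rewrite mxE /mx_tensor !enum_valK. Qed.

Lemma tvec_colK : cancel tvec_col col_tvec.
Proof. by move=> x; apply: functional_extensionality => i; rewrite /col_tvec mxE enum_rankK. Qed.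

Lemma col_tvecK : cancel col_tvec tvec_col.
Proof. by move=> v; apply/matrixP => a b; rewrite mxE /col_tvec enum_valK (ord1 b). Qed.

Lemma tensor_mx_inj : injective tensor_mx.
Proof. exact: can_inj tensor_mxK. Qed.

Lemma tvec_col_eq0 x : tvec_col x = 0 <-> x = (fun _ => 0).
Proof.
split=> [x0|->]; last by apply/matrixP => a b; rewrite !mxE.
by rewrite -(tvec_colK x) x0; apply: functional_extensionality => i; rewrite /col_tvec mxE.
Qed.

Lemma tensor_mx_mul A B : tensor_mx (tmul A B) = tensor_mx A *m tensor_mx B.
Proof.
apply/matrixP => a b; rewrite !mxE /tmul big_enum_val.
by apply: eq_bigr => c _; rewrite !mxE.
Qed.

Lemma tvec_col_mul A x : tvec_col (tmulv A x) = tensor_mx A *m tvec_col x.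
Proof.
apply/matrixP => a b; rewrite !mxE /tmulv big_enum_val.
by apply: eq_bigr => c _; rewrite !mxE.
Qed.

Lemma tensor_mx_id : tensor_mx (@tid R N I) = 1%:M.
Proof. by apply/matrixP => a b; rewrite !mxE /tid (inj_eq enum_val_inj); case: eqP. Qed.

Lemma tensor_mx_H A : tensor_mx (tH A) = (tensor_mx A)^t*.
Proof. by apply/matrixP => a b; rewrite !mxE. Qed.

Lemma tspec_eigenvalue A l : tspec A l <-> eigenvalue (tensor_mx A) l.
Proof.
split=> [[x [x0 Ax]]|/eigenvalue_colP[v Av v0]].
  apply/eigenvalue_colP; exists (tvec_col x); last by apply/eqP => /tvec_col_eq0.
  by rewrite -tvec_col_mul Ax; apply/matrixP => a b; rewrite !mxE.
exists (col_tvec v); split; first by move=> /tvec_col_eq0; rewrite col_tvecK; apply/eqP.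
rewrite -[LHS]tvec_colK tvec_col_mul col_tvecK Av.
by apply: functional_extensionality => i; rewrite /col_tvec mxE.
Qed.

Lemma tquad_mx M x : tquad M x = ((tvec_col x)^t* *m tensor_mx M *m tvec_col x) 0 0.
Proof.
rewrite /tquad mxE big_enum_val; under eq_bigr => a _ do rewrite big_enum_val.
under [RHS]eq_bigr => b _ do rewrite mxE big_distrl /=.
rewrite exchange_big /=; apply: eq_bigr => a _; apply: eq_bigr => b _.
by rewrite !mxE.
Qed.

Lemma herm_pd_posdefmx M : herm_pd M <-> posdefmx (tensor_mx M).
Proof.
split=> -[M_herm M_pos]; split.
- by rewrite -tensor_mx_H M_herm.
- move=> v v0; rewrite -(col_tvecK v) -tquad_mx; apply: M_pos.
  by move=> /tvec_col_eq0; rewrite col_tvecK; apply/eqP.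
- by apply: tensor_mx_inj; rewrite tensor_mx_H.
- by move=> x x0; rewrite tquad_mx; apply: M_pos; apply/eqP => /tvec_col_eq0.
Qed.

Lemma tensor_mx_tinv A :
  tensor_mx A \in unitmx -> tensor_mx (tinv A) = invmx (tensor_mx A).
Proof.
move=> A_unit; pose is_inv B := tmul A B = @tid R N I /\ tmul B A = @tid R N I.
have [AAi _] : is_inv (tinv A).
  apply: (epsilon_spec (inhabits A) is_inv).
  exists (mx_tensor (invmx (tensor_mx A))); split; apply: tensor_mx_inj;
    by rewrite tensor_mx_mul mx_tensorK tensor_mx_id ?mulmxV ?mulVmx.
move/(congr1 tensor_mx): AAi; rewrite tensor_mx_mul tensor_mx_id.
by move/(congr1 (mulmx (invmx (tensor_mx A)))); rewrite mulKmx // mulmx1.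
Qed.

Lemma tsqrt_mx M : herm_pd M ->
  posdefmx (tensor_mx (tsqrt M)) /\ tensor_mx (tsqrt M) *m tensor_mx (tsqrt M) = tensor_mx M.
Proof.
move=> /herm_pd_posdefmx /posdefmx_sqrt[S S_pd SS].
have [/herm_pd_posdefmx sqrt_pd sqrt_sqr] : herm_pd (tsqrt M) /\ tmul (tsqrt M) (tsqrt M) = M.
  apply: (epsilon_spec (inhabits M) (fun S => herm_pd S /\ tmul S S = M)).
  exists (mx_tensor S); split; first by apply/herm_pd_posdefmx; rewrite mx_tensorK.
  by apply: tensor_mx_inj; rewrite tensor_mx_mul mx_tensorK.
by rewrite -tensor_mx_mul sqrt_sqr.
Qed.

Lemma is_wmp_mx M W A X :
  is_wmp M W A X <-> is_wmpmx (tensor_mx M) (tensor_mx W) (tensor_mx A) (tensor_mx X).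
Proof.
rewrite /is_wmp /is_wmpmx -!mulmxA -!tensor_mx_mul -!tensor_mx_H.
by split=> -[? ? ? ?]; split; try congruence; apply: tensor_mx_inj.
Qed.

Lemma wmp_mx M W A :
  (exists B, is_wmpmx (tensor_mx M) (tensor_mx W) (tensor_mx A) B) ->
  is_wmpmx (tensor_mx M) (tensor_mx W) (tensor_mx A) (tensor_mx (wmp M W A)).
Proof.
move=> [B B_wmp]; apply/is_wmp_mx; apply: (epsilon_spec (inhabits A) (is_wmp M W A)).
by exists (mx_tensor B); apply/is_wmp_mx; rewrite mx_tensorK.
Qed.

End TensorMatrix.

Theorem theorem4p7 (R : rcfType) (N : nat) (I : 'I_N -> nat)
    (A Nw : tensor R I) :
  herm_pd Nw ->
  let At := tmul (tsqrt Nw) (tmul A (tisqrt Nw)) in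
  (forall l : R[i], tspec A l <-> tspec At l) /\
  (forall l : R[i], tspec (wmp Nw Nw A) l <-> tspec (mp At) l) /\
  (tmul (wct Nw A) A = tmul A (wct Nw A) ->
   forall l : R[i], l != 0 -> (tspec A l <-> tspec (wmp Nw Nw A) l^-1)).
Proof.
move=> /tsqrt_mx[S_pd SS] At; set S := tensor_mx (tsqrt Nw) in S_pd SS.
have S_unit := posdefmx_unit S_pd; have S_herm := S_pd.1.
have At_mx : tensor_mx At = S *m tensor_mx A *m invmx S.
  by rewrite !tensor_mx_mul (tensor_mx_tinv S_unit) mulmxA.
have Aw_wmp : is_wmpmx (S *m S) (S *m S) (tensor_mx A) (tensor_mx (wmp Nw Nw A)).
  by rewrite SS; apply: wmp_mx; rewrite -SS; apply: wmpmx_exists.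
have At_mp : is_mpmx (tensor_mx At) (tensor_mx (mp At)).
  by rewrite -tensor_mx_id; apply: wmp_mx; rewrite tensor_mx_id; apply: mpmx_exists.
have mp_At : tensor_mx (mp At) = S *m tensor_mx (wmp Nw Nw A) *m invmx S.
  by apply: mpmx_unique At_mp _; rewrite At_mx; apply/wmpmx_conj.
split; [|split].
- by move=> l; rewrite !tspec_eigenvalue At_mx eigenvalue_conj.
- by move=> l; rewrite !tspec_eigenvalue mp_At eigenvalue_conj.
move=> A_wnormal l l0.
have N_unit : tensor_mx Nw \in unitmx by rewrite -SS unitmx_mul S_unit.
have At_normal : tensor_mx At \is normalmx.
  rewrite At_mx; apply: weighted_normal_conj S_unit S_herm _.
  move/(congr1 (@tensor_mx _ _ _)): A_wnormal.
  by rewrite /wct !tensor_mx_mul (tensor_mx_tinv N_unit) tensor_mx_H -SS.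
rewrite !tspec_eigenvalue -(eigenvalue_conj _ _ S_unit) -At_mx.
by rewrite -(normal_mpmx_eigenvalue At_normal At_mp l0) mp_At eigenvalue_conj.
Qed.
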